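(* Let $(A,* )$ be a finite-dimensional associative algebra, $(l,\rho,V)$ a finite-dimensional bimodule of $A$, and $T:V\to A$ an $\mathcal O$-operator associated to $(l,\rho,V)$. Let $T(V)\subset A$ carry the products $T(u)\succ T(v)=T(l(T(u))v)$, $T(u)\prec T(v)=T(\rho(T(v))u)$ ($u,v\in V$). Let $\mathcal D=T(V)\oplus V^*$ with products $$(x+a^* )\succ(y+b^* )=x\succ y+\rho^*(x)b^*,\qquad (x+a^* )\prec(y+b^* )=x\prec y+l^*(y)a^*$$ for $x,y\in T(V)$, $a^*,b^*\in V^*$. Then $\mathcal D$ is a dendriform algebra, and, with $\{v_1,\dots,v_m\}$ a basis of $V$ with dual basis $\{v_1^*,\dots,v_m^*\}$ and $T$ identified with $\sum_i T(v_i)\otimes v_i^*\in\mathcal D\otimes\mathcal D$, the element $r=T+\sigma(T)$ is a symmetric solution of the $D$-equation $r_{12}*r_{13}=r_{13}\prec r_{23}+r_{23}\succ r_{12}$ in $\mathcal D$ (where $*=\succ+\prec$ on $\mathcal D$).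
   Context: A bimodule of an associative algebra $(A,* )$ is a pair of linear maps $l,\rho:A\to\mathfrak{gl}(V)$ with $l(x*y)=l(x)l(y)$, $\rho(x*y)=\rho(y)\rho(x)$, $l(x)\rho(y)=\rho(y)l(x)$. For such maps, $l^*,\rho^*:A\to\mathfrak{gl}(V^* )$ are $\langle l^*(x)u^*,v\rangle=\langle u^*,l(x)v\rangle$, $\langle\rho^*(x)u^*,v\rangle=\langle u^*,\rho(x)v\rangle$ (here restricted to $T(V)$). An $\mathcal O$-operator associated to $(l,\rho,V)$ is a linear $T:V\to A$ with $T(u)*T(v)=T(l(T(u))v+\rho(T(v))u)$ for all $u,v\in V$. A dendriform algebra is a vector space with bilinear products $\prec,\succ$ such that, writing $x*y=x\prec y+x\succ y$: $(x\prec y)\prec z=x\prec(y*z)$, $(x\succ y)\prec z=x\succ(y\prec z)$, $x\succ(y\succ z)=(x*y)\succ z$. $\sigma(u\otimes v)=v\otimes u$. For $r=\sum_i x_i\otimes y_i$: $r_{12}*r_{13}=\sum_{i,j}x_i*x_j\otimes y_i\otimes y_j$, $r_{13}\prec r_{23}=\sum_{i,j}x_i\otimes x_j\otimes y_i\prec y_j$, $r_{23}\succ r_{12}=\sum_{i,j}x_j\otimes x_i\succ y_j\otimes y_i$. *)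

From HB Require Import structures.
From mathcomp Require Import all_boot all_order all_algebra.
Set Implicit Arguments. Unset Strict Implicit. Unset Printing Implicit Defensive.
Import GRing.Theory.
Local Open Scope ring_scope.

(* Ambient carrier of D = T(V) oplus V^dual : pairs (x, a) with x : A, a : V^dual = 'Hom(V, K^o).
   Elements of D are those pairs whose first component lies in limg T. *)
Definition Dty (K : fieldType) (A V : vectType K) : Type :=
  (A * 'Hom(V, K^o))%type.

(* x >- y on T(V): T(u) >- T(v) = T(l(T u) v); the preimage v of y is taken via the
   linear right inverse (T^-1)%VF (the value does not depend on the preimage, by the
   O-operator identity). *)
Definition dsucc (K : fieldType) (A V : vectType K) (l rho : 'Hom(A, 'End(V)))
  (T : 'Hom(V, A)) (X Y : Dty A V) : Dty A V :=
  (T (l X.1 ((T^-1)%VF Y.1)), (Y.2 \o rho X.1)%VF).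

Definition dprec (K : fieldType) (A V : vectType K) (l rho : 'Hom(A, 'End(V)))
  (T : 'Hom(V, A)) (X Y : Dty A V) : Dty A V :=
  (T (rho Y.1 ((T^-1)%VF X.1)), (X.2 \o l Y.1)%VF).

Definition dmul (K : fieldType) (A V : vectType K) (l rho : 'Hom(A, 'End(V)))
  (T : 'Hom(V, A)) (X Y : Dty A V) : Dty A V :=
  dsucc l rho T X Y + dprec l rho T X Y.

(* r = T + sigma(T) = sum_i (T(v_i) tensor v_i^dual + v_i^dual tensor T(v_i)), indexed by (i, b). *)
Definition rl (K : fieldType) (A V : vectType K) (T : 'Hom(V, A)) (m : nat)
  (vs : m.-tuple V) (k : 'I_m * bool) : Dty A V :=
  if k.2 then (T vs`_k.1, 0) else (0, linfun (coord vs k.1 : V -> K^o)).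
Definition rr (K : fieldType) (A V : vectType K) (T : 'Hom(V, A)) (m : nat)
  (vs : m.-tuple V) (k : 'I_m * bool) : Dty A V :=
  if k.2 then (0, linfun (coord vs k.1 : V -> K^o)) else (T vs`_k.1, 0).

From HB Require Import structures.
From mathcomp Require Import all_boot all_order all_algebra.
Import GRing.Theory.
Set Implicit Arguments. Unset Strict Implicit. Unset Printing Implicit Defensive.
Local Open Scope ring_scope.

(* Contracting r = T + σ(T) with a functional F in one tensor slot gives the
   element [rcontr F] = (T F', v ↦ F (T v, 0)) of D, where F' = [dualv F] ∈ V
   represents F on the summand V^*; by the symmetry of r the slot does not
   matter.  As the products of D are bilinear, the D-equation tested against
   f ⊗ g ⊗ h becomes  f (X_g * X_h) = h (X_f ≺ X_g) + g (X_h ≻ X_f)  with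
   X_F = rcontr F, and expanding X_F both sides are the same sum of four
   evaluations.
   The only property of T needed there, which is also what makes the products
   on T(V) well defined, is that T (l (T u) w) and T (ρ (T u) w) depend on w
   only through T w: by the O-operator identity they vanish when T w does.
   With it the dendriform axioms reduce to the bimodule axioms. *)

Lemma sum_pair (U W : nmodType) (I : Type) (r : seq I) (P : pred I) (X : I -> U * W) :
  \sum_(i <- r | P i) X i = (\sum_(i <- r | P i) (X i).1, \sum_(i <- r | P i) (X i).2).
Proof. by elim/big_rec3: _ => // i y1 y2 y3 _ ->. Qed.

Lemma add_pair (U W : nmodType) (x y : U) (a b : W) : (x, a) + (y, b) = (x + y, a + b).
Proof. by []. Qed.

Lemma scale_pair (R : pzRingType) (U W : lmodType R) (c : R) (x : U) (a : W) :
  c *: (x, a) = (c *: x, c *: a).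
Proof. by []. Qed.

Lemma sum2_bilinear (K : fieldType) (U U' : lmodType K) (W : vectType K)
    (B : {bilinear U -> U' -> W}) (f : 'Hom(W, K^o)) (I J : finType)
    (a : I -> K) (b : J -> K) (X : I -> U) (Y : J -> U') :
  \sum_i \sum_j f (B (X i) (Y j)) * a i * b j
  = f (B (\sum_i a i *: X i) (\sum_j b j *: Y j)).
Proof.
rewrite linear_sumlz linear_sum; apply: eq_bigr => i _.
rewrite linearZl_LR linear_sumr linearZ linear_sum /= scaler_sumr; apply: eq_bigr => j _.
rewrite linearZr_LR linearZ /= -![_ *: _]/(_ * _).
by rewrite mulrC [_ * a i]mulrC mulrCA.
Qed.

Section Contraction.
Variables (K : fieldType) (A V : vectType K) (T : 'Hom(V, A)) (m : nat) (vs : m.-tuple V).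
Hypothesis vs_basis : basis_of fullv vs.

Local Notation coordf i := (linfun (coord vs i : V -> K^o)).

Lemma lfun_coord_expand (phi : 'Hom(V, K^o)) : phi = \sum_(i < m) phi vs`_i *: coordf i.
Proof.
apply/lfunP => w; rewrite sum_lfunE {1}(coord_basis vs_basis (memvf w)) linear_sum.
by apply: eq_bigr => i _; rewrite linearZ scale_lfunE lfunE /= -![_ *: _]/(_ * _) mulrC.
Qed.

Lemma lfun_pairD (F : 'Hom(Dty A V, K^o)) x y : F (x + y, 0) = F (x, 0) + F (y, 0).
Proof. by rewrite -[0 in LHS](addr0 0) -add_pair linearD. Qed.

Definition dualv (F : 'Hom(Dty A V, K^o)) : V := \sum_(i < m) F (0, coordf i) *: vs`_i.

Lemma lfun_pairE (F : 'Hom(Dty A V, K^o)) x phi : F (x, phi) = F (x, 0) + phi (dualv F).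
Proof.
have -> : (x, phi) = (x, 0) + \sum_(i < m) phi vs`_i *: ((0, coordf i) : Dty A V).
  rewrite sum_pair /= big1 => [|i _]; last exact: scaler0.
  by rewrite -lfun_coord_expand -[RHS]/(x + 0, 0 + phi) addr0 add0r.
rewrite linearD linear_sum /= linear_sum; congr (_ + _); apply: eq_bigr => i _.
by rewrite !linearZ /= -![_ *: _]/(_ * _) mulrC.
Qed.

Definition rcontr (F : 'Hom(Dty A V, K^o)) : Dty A V := \sum_k F (rr T vs k) *: rl T vs k.

Lemma rcontrE F : rcontr F = (T (dualv F), \sum_(i < m) F (T vs`_i, 0) *: coordf i).
Proof.
rewrite /rcontr -(pair_bigA _ (fun i b => F (rr T vs (i, b)) *: rl T vs (i, b))).
under eq_bigr do rewrite big_bool /= !scale_pair add_pair !scaler0 addr0 add0r.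
by rewrite sum_pair linear_sum; congr (_, _); apply: eq_bigr => i _; rewrite linearZ.
Qed.

Lemma rcontr_fst F : (rcontr F).1 = T (dualv F).
Proof. by rewrite rcontrE. Qed.

Lemma rcontr_sndE F w : (rcontr F).2 w = F (T w, 0).
Proof.
rewrite rcontrE sum_lfunE.
transitivity (F (\sum_(i < m) coord vs i w *: ((T vs`_i, 0) : Dty A V))).
  rewrite linear_sum; apply: eq_bigr => i _.
  by rewrite linearZ scale_lfunE lfunE /= -![_ *: _]/(_ * _) mulrC.
under eq_bigr do rewrite scale_pair scaler0.
rewrite sum_pair /= big1_eq [in RHS](coord_basis vs_basis (memvf w)) linear_sum.
by under [in RHS]eq_bigr do rewrite linearZ.
Qed.

Lemma sum_rl_rr_swap (R : Type) (idx : R) (op : Monoid.com_law idx)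
    (G : Dty A V -> Dty A V -> R) :
  \big[op/idx]_k G (rl T vs k) (rr T vs k) = \big[op/idx]_k G (rr T vs k) (rl T vs k).
Proof.
have swapK : involutive (fun k : 'I_m * bool => (k.1, ~~ k.2)) by case=> i [].
by rewrite (reindex_inj (inv_inj swapK)); apply: eq_bigr => -[i []].
Qed.

Lemma rcontr_swap (F : 'Hom(Dty A V, K^o)) : \sum_k F (rl T vs k) *: rr T vs k = rcontr F.
Proof. by rewrite (sum_rl_rr_swap _ (fun X Y => F X *: Y)). Qed.

End Contraction.

Section DProducts.
Variables (K : fieldType) (A V : vectType K) (l rho : 'Hom(A, 'End(V))) (T : 'Hom(V, A)).

Lemma dsucc_is_bilinear : bilinear_for *:%R *:%R (dsucc l rho T).
Proof.
split=> [Y a X Z | X a Y Z]; rewrite /dsucc /= scale_pair add_pair.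
  by rewrite !linearP !add_lfunE !scale_lfunE linearP /= comp_lfunDr comp_lfunZr.
by rewrite !linearP /= comp_lfunDl comp_lfunZl.
Qed.

Lemma dprec_is_bilinear : bilinear_for *:%R *:%R (dprec l rho T).
Proof.
split=> [Y a X Z | X a Y Z]; rewrite /dprec /= scale_pair add_pair.
  by rewrite !linearP /= comp_lfunDl comp_lfunZl.
by rewrite !linearP !add_lfunE !scale_lfunE linearP /= comp_lfunDr comp_lfunZr.
Qed.

Lemma dmul_is_bilinear : bilinear_for *:%R *:%R (dmul l rho T).
Proof.
have [succl succr] := dsucc_is_bilinear; have [precl precr] := dprec_is_bilinear.
by split=> [Y a X Z | X a Y Z]; rewrite /dmul (succl, succr) (precl, precr) /= scalerDr addrACA.
Qed.

HB.instance Definition _ := bilinear_isBilinear.Build K (Dty A V) (Dty A V) (Dty A V)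
  *:%R *:%R (dsucc l rho T) dsucc_is_bilinear.
HB.instance Definition _ := bilinear_isBilinear.Build K (Dty A V) (Dty A V) (Dty A V)
  *:%R *:%R (dprec l rho T) dprec_is_bilinear.
HB.instance Definition _ := bilinear_isBilinear.Build K (Dty A V) (Dty A V) (Dty A V)
  *:%R *:%R (dmul l rho T) dmul_is_bilinear.

End DProducts.

Section OOperator.
Variables (K : fieldType) (A V : vectType K) (mulA : A -> A -> A).
Hypothesis mulA_linl : forall (a : K) (x y z : A), mulA (a *: x + y) z = a *: mulA x z + mulA y z.
Hypothesis mulA_linr : forall (a : K) (x y z : A), mulA z (a *: x + y) = a *: mulA z x + mulA z y.
Variables (l rho : 'Hom(A, 'End(V))) (T : 'Hom(V, A)).
Hypothesis l_mul : forall x y : A, l (mulA x y) = (l x \o l y)%VF.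
Hypothesis rho_mul : forall x y : A, rho (mulA x y) = (rho y \o rho x)%VF.
Hypothesis l_rho_comm : forall x y : A, (l x \o rho y)%VF = (rho y \o l x)%VF.
Hypothesis T_Oop : forall u v : V, mulA (T u) (T v) = T (l (T u) v + rho (T v) u).
Variables (m : nat) (vs : m.-tuple V).
Hypothesis vs_basis : basis_of fullv vs.

Lemma mul0A z : mulA 0 z = 0.
Proof. by have := mulA_linl 1 0 0 z; rewrite !scale1r addr0 -[LHS]addr0 => /addrI. Qed.

Lemma mulA0 z : mulA z 0 = 0.
Proof. by have := mulA_linr 1 0 0 z; rewrite !scale1r addr0 -[LHS]addr0 => /addrI. Qed.

Lemma Oop_kerl u w : T w = 0 -> T (l (T u) w) = 0.
Proof. by move=> Tw0; have := T_Oop u w; rewrite Tw0 mulA0 raddf0 lfunE addr0. Qed.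

Lemma Oop_kerr u w : T w = 0 -> T (rho (T u) w) = 0.
Proof. by move=> Tw0; have := T_Oop w u; rewrite Tw0 mul0A raddf0 lfunE add0r. Qed.

Lemma Oop_congl u t t' : T t = T t' -> T (l (T u) t) = T (l (T u) t').
Proof.
move=> Tt; apply/eqP; rewrite -subr_eq0 -!linearB /= Oop_kerl //.
by rewrite linearB /= Tt subrr.
Qed.

Lemma Oop_congr u t t' : T t = T t' -> T (rho (T u) t) = T (rho (T u) t').
Proof.
move=> Tt; apply/eqP; rewrite -subr_eq0 -!linearB /= Oop_kerr //.
by rewrite linearB /= Tt subrr.
Qed.

Lemma T_lfunVK v : T ((T^-1)%VF (T v)) = T v.
Proof. by rewrite limg_lfunVK // memv_img ?memvf. Qed.

Lemma Oop_lfunVl u v : T (l (T u) ((T^-1)%VF (T v))) = T (l (T u) v).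
Proof. exact/Oop_congl/T_lfunVK. Qed.

Lemma Oop_lfunVr u v : T (rho (T u) ((T^-1)%VF (T v))) = T (rho (T u) v).
Proof. exact/Oop_congr/T_lfunVK. Qed.

Lemma Oop_mulE u v : T (l (T u) v) + T (rho (T v) u) = mulA (T u) (T v).
Proof. by rewrite T_Oop linearD. Qed.

Lemma dendriform_Dty (X Y Z : Dty A V) :
  X.1 \in limg T -> Y.1 \in limg T -> Z.1 \in limg T ->
  [/\ dprec l rho T (dprec l rho T X Y) Z = dprec l rho T X (dmul l rho T Y Z),
      dprec l rho T (dsucc l rho T X Y) Z = dsucc l rho T X (dprec l rho T Y Z) &
      dsucc l rho T X (dsucc l rho T Y Z) = dsucc l rho T (dmul l rho T X Y) Z].
Proof.
case: X Y Z => [x a] [y b] [z c] /= /memv_imgP[u _ ->] /memv_imgP[v _ ->] /memv_imgP[w _ ->].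
rewrite /dmul /dprec /dsucc /= !Oop_lfunVl !Oop_lfunVr !Oop_mulE.
split; congr (_, _).
- by rewrite rho_mul !comp_lfunE.
- by rewrite l_mul comp_lfunA.
- by rewrite (Oop_congl _ (Oop_lfunVr _ _)) -comp_lfunE -l_rho_comm comp_lfunE.
- by rewrite -!comp_lfunA l_rho_comm.
- by rewrite T_Oop Oop_lfunVl -(T_Oop u v) l_mul comp_lfunE.
- by rewrite rho_mul comp_lfunA.
Qed.

Lemma rcontr_Dequation (f g h : 'Hom(Dty A V, K^o)) :
  f (dmul l rho T (rcontr T vs g) (rcontr T vs h))
  = h (dprec l rho T (rcontr T vs f) (rcontr T vs g))
    + g (dsucc l rho T (rcontr T vs h) (rcontr T vs f)).
Proof.
rewrite /dmul /dsucc /dprec !rcontr_fst add_pair.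
rewrite !Oop_lfunVl !Oop_lfunVr.
rewrite (lfun_pairE vs_basis f) (lfun_pairE vs_basis g) (lfun_pairE vs_basis h)
  !lfun_pairD !add_lfunE !comp_lfunE !(rcontr_sndE _ vs_basis).
by rewrite [RHS]addrACA [RHS]addrC.
Qed.

End OOperator.

Theorem theorem4p4p13 (K : fieldType) (A V : vectType K) (mulA : A -> A -> A)
  (mulA_linl : forall (a : K) (x y z : A), mulA (a *: x + y) z = a *: mulA x z + mulA y z)
  (mulA_linr : forall (a : K) (x y z : A), mulA z (a *: x + y) = a *: mulA z x + mulA z y)
  (mulA_assoc : forall x y z : A, mulA (mulA x y) z = mulA x (mulA y z))
  (l rho : 'Hom(A, 'End(V)))
  (l_mul : forall x y : A, l (mulA x y) = (l x \o l y)%VF)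
  (rho_mul : forall x y : A, rho (mulA x y) = (rho y \o rho x)%VF)
  (l_rho_comm : forall x y : A, (l x \o rho y)%VF = (rho y \o l x)%VF)
  (T : 'Hom(V, A))
  (T_Oop : forall u v : V, mulA (T u) (T v) = T (l (T u) v + rho (T v) u))
  (m : nat) (vs : m.-tuple V) (vs_basis : basis_of fullv vs) :
  (forall X Y Z : Dty A V, X.1 \in limg T -> Y.1 \in limg T -> Z.1 \in limg T ->
     [/\ dprec l rho T (dprec l rho T X Y) Z = dprec l rho T X (dmul l rho T Y Z),
         dprec l rho T (dsucc l rho T X Y) Z = dsucc l rho T X (dprec l rho T Y Z) &
         dsucc l rho T X (dsucc l rho T Y Z) = dsucc l rho T (dmul l rho T X Y) Z])
  /\
  (forall f g : 'Hom(Dty A V, K^o),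
     \sum_(k : 'I_m * bool) f (rl T vs k) * g (rr T vs k)
     = \sum_(k : 'I_m * bool) f (rr T vs k) * g (rl T vs k))
  /\
  (forall f g h : 'Hom(Dty A V, K^o),
     \sum_(k : 'I_m * bool) \sum_(k' : 'I_m * bool)
        f (dmul l rho T (rl T vs k) (rl T vs k')) * g (rr T vs k) * h (rr T vs k')
     = \sum_(k : 'I_m * bool) \sum_(k' : 'I_m * bool)
        (f (rl T vs k) * g (rl T vs k') * h (dprec l rho T (rr T vs k) (rr T vs k'))
         + f (rl T vs k') * g (dsucc l rho T (rl T vs k) (rr T vs k')) * h (rr T vs k))).
Proof.
split; first exact: dendriform_Dty.
split=> [f g|f g h]; first by rewrite (sum_rl_rr_swap T vs _ (fun X Y => f X * g Y)).
rewrite (sum2_bilinear (dmul l rho T)).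
under [in RHS]eq_bigr do rewrite big_split.
rewrite [in RHS]big_split /=.
under [X in _ = X + _]eq_bigr => k _ do under eq_bigr => k2 _ do rewrite mulrC mulrA.
under [X in _ = _ + X]eq_bigr => k _ do under eq_bigr => k2 _ do rewrite [_ * g _]mulrC mulrAC.
rewrite !sum2_bilinear !rcontr_swap.
exact: rcontr_Dequation.
Qed.
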